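(* Let $s\ge 2$ and $p\ge 2$ be integers and define \[G_{s,p}(x)=\frac{x(x^s-1)^p-(x^s-x)^p}{x(x-1)^p},\] which is a polynomial in $\mathbb{Z}[x]$. Then $G_{s,2}(x)$ divides $G_{s,p}(x)$ if and only if $p\equiv 2 \pmod{2(2s-1)}$.
   Context: $G_{s,p}(x)$ is (after the substitution $x=1-q$) the non-linear factor of the chromatic polynomial of the theta-graph $\Theta^{s,p}$, the graph on $2+p(s-1)$ vertices obtained from $p$ disjoint paths of length $s$ by identifying all their left-hand endpoints and all their right-hand endpoints. *)

From mathcomp Require Import all_boot all_order all_algebra.
Set Implicit Arguments. Unset Strict Implicit. Unset Printing Implicit Defensive.
Import GRing.Theory.
Local Open Scope ring_scope.

Definition Gnum (s p : nat) : {poly int} :=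
  'X * ('X ^+ s - 1) ^+ p - ('X ^+ s - 'X) ^+ p.

(* Denominator  x (x - 1)^p, a monic polynomial, so %/ is exact division. *)
Definition Gden (p : nat) : {poly int} := 'X * ('X - 1) ^+ p.

Definition G (s p : nat) : {poly int} := Gnum s p %/ Gden p.

Definition dvdZx (a b : {poly int}) : Prop := exists q : {poly int}, b = q * a.

From mathcomp Require Import all_boot all_order all_algebra all_field ring zify.
Set Implicit Arguments.
Unset Strict Implicit.
Unset Printing Implicit Defensive.

Import GRing.Theory.
Local Open Scope ring_scope.

(* With S = 1 + x + ... + x^(s-1) and T = 1 + x + ... + x^(s-2), the quotient
   G_{s,p} is S^p - x^(p-1) T^p, and G_{s,2} = (x^n - 1)/(x - 1) with n = 2s - 1.
   If p = 2m with m = nk + 1, then G_{s,p} = (A^m - B^m) - (x^(nk) - 1) B^m for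
   A = S^2, B = x T^2; both terms are multiples of A - B = G_{s,2}.
   Conversely, let z be a primitive 2n-th root of unity. Then w = z^2 is a root
   of G_{s,2}, and w^s = -z, so G_{s,p}(w) = 0 forces z^p = z^2, i.e. 2n | p - 2. *)

Definition Gexpr (R : comPzRingType) (x : R) (s p : nat) : R :=
  (\sum_(i < s) x ^+ i) ^+ p - x ^+ p.-1 * (\sum_(i < s.-1) x ^+ i) ^+ p.

Lemma rmorph_Gexpr (R S : comPzRingType) (f : {rmorphism R -> S}) (x : R) s p :
  f (Gexpr x s p) = Gexpr (f x) s p.
Proof.
rewrite /Gexpr !(rmorphB, rmorphM, rmorphXn, rmorph_sum).
by congr (_ ^+ _ - _ * _ ^+ _); apply: eq_bigr => i _; rewrite rmorphXn.
Qed.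

Section GexprIdentities.
Variable R : comPzRingType.
Implicit Types x : R.

Lemma theta_numerator_factor x s p : (0 < s)%N -> (0 < p)%N ->
  x * (x ^+ s - 1) ^+ p - (x ^+ s - x) ^+ p = x * (x - 1) ^+ p * Gexpr x s p.
Proof.
case: s => // s _; case: p => // p _.
have subX1 : x ^+ s.+1 - x = x * (x - 1) * \sum_(i < s) x ^+ i.
  by rewrite -mulrA -subrX1 mulrBr mulr1 exprS.
by rewrite /Gexpr subrX1 subX1 /= !exprMn !exprS; ring.
Qed.

Lemma subr1_Gexpr2 x s : (0 < s)%N -> (x - 1) * Gexpr x s 2 = x ^+ (2 * s - 1) - 1.
Proof.
case: s => // t _.
have S_rec : \sum_(i < t.+1) x ^+ i = 1 + x * \sum_(i < t) x ^+ i.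
  by rewrite big_ord_recl mulr_sumr; congr (_ + _); apply: eq_bigr => i _; rewrite exprS.
rewrite /Gexpr S_rec /= (_ : 2 * t.+1 - 1 = (t + t).+1)%N; last by lia.
set T := \sum_(i < t) _.
have geomT : x ^+ t = (x - 1) * T + 1 by rewrite -subrX1 subrK.
by rewrite (exprS x (t + t)) exprD geomT; ring.
Qed.

Lemma Gexpr2_dvd_Gexpr x s k : (0 < s)%N ->
  exists q, Gexpr x s (2 * ((2 * s - 1) * k).+1) = q * Gexpr x s 2.
Proof.
move=> s_gt0; set n := (2 * s - 1)%N; set m := (n * k).+1.
set S := \sum_(i < s) x ^+ i; set T := \sum_(i < s.-1) x ^+ i.
have G2E : Gexpr x s 2 = S ^+ 2 - x * T ^+ 2 by [].
have GpE : Gexpr x s (2 * m)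
    = ((S ^+ 2) ^+ m - (x * T ^+ 2) ^+ m) - (x ^+ (n * k) - 1) * (x * T ^+ 2) ^+ m.
  rewrite /Gexpr (_ : (2 * m).-1 = n * k + m)%N; last by rewrite /m; lia.
  by rewrite -/S -/T exprD (exprM S 2 m) (exprM T 2 m) [(x * _) ^+ m]exprMn; ring.
have geom_nk : x ^+ (n * k) - 1 = (x - 1) * Gexpr x s 2 * \sum_(i < k) (x ^+ n) ^+ i.
  by rewrite subr1_Gexpr2 // -subrX1 exprM.
rewrite GpE subrXX geom_nk -G2E.
exists (\sum_(i < m) (S ^+ 2) ^+ (m.-1 - i) * (x * T ^+ 2) ^+ i
        - (x - 1) * (\sum_(i < k) (x ^+ n) ^+ i) * (x * T ^+ 2) ^+ m).
ring.
Qed.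

End GexprIdentities.

Lemma Gden_monic p : Gden p \is monic.
Proof. by rewrite monicMl ?monicX // monic_exp // -polyC1 monicXsubC. Qed.

Lemma G_Gexpr s p : (0 < s)%N -> (0 < p)%N -> G s p = Gexpr 'X s p.
Proof.
move=> s_gt0 p_gt0; rewrite /G /Gnum theta_numerator_factor //.
by rewrite mulrC (Pdiv.IdomainMonic.mulpK (Gden_monic p)).
Qed.

Section GexprRoots.
Variable R : idomainType.

Lemma Gexpr2_root (x : R) s : (0 < s)%N -> x != 1 -> x ^+ (2 * s - 1) = 1 ->
  Gexpr x s 2 = 0.
Proof.
move=> s_gt0 x_neq1 xn; apply: (mulfI (x := x - 1)); first by rewrite subr_eq0.
by rewrite mulr0 subr1_Gexpr2 // xn subrr.
Qed.

Lemma Gexpr_root_sqr (z : R) s p : (0 < s)%N -> (0 < p)%N ->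
  z ^+ (2 * s - 1) = -1 -> 1 + z != 0 -> Gexpr (z ^+ 2) s p = 0 -> z ^+ p = z ^+ 2.
Proof.
move=> s_gt0 p_gt0 zn z1 Gz.
have ws : (z ^+ 2) ^+ s = - z.
  by rewrite -exprM (_ : 2 * s = (2 * s - 1).+1)%N ?exprS ?zn ?mulrN1 //; lia.
have := theta_numerator_factor (z ^+ 2) s_gt0 p_gt0.
rewrite Gz mulr0 ws (_ : - z - 1 = - (1 + z)); last by ring.
rewrite (_ : - z - z ^+ 2 = z * - (1 + z)); last by ring.
rewrite exprMn -mulrBl => /eqP; rewrite mulf_eq0 expf_eq0 oppr_eq0 (negbTE z1).
by rewrite andbF orbF subr_eq0 => /eqP.
Qed.

Lemma prim_root_half (n : nat) (z : R) : (0 < n)%N ->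
  (2 * n).-primitive_root z -> z ^+ n = -1.
Proof.
move=> n_gt0 pz; have : (z ^+ n) ^+ 2 == 1 by rewrite -exprM mulnC prim_expr_order.
rewrite sqrf_eq1 => /orP [|/eqP //].
by rewrite -(prim_order_dvd pz) => /dvdn_leq; lia.
Qed.

Lemma dvd_pred2_of_G_dvd (z : R) s p q : (2 <= s)%N -> (2 <= p)%N ->
  (2 * (2 * s - 1)).-primitive_root z -> G s p = q * G s 2 ->
  (2 * (2 * s - 1) %| p - 2)%N.
Proof.
move=> s_ge2 p_ge2 pz Gp_dvd; set n := (2 * s - 1)%N.
have zn : z ^+ n = -1 by apply: prim_root_half pz; lia.
have z2_neq1 : z ^+ 2 != 1 by rewrite -(prim_order_dvd pz); apply/negP => /dvdn_leq; lia.
have z1 : 1 + z != 0.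
  by apply: contraNneq z2_neq1 => /eqP; rewrite addrC addr_eq0 => /eqP ->; rewrite sqrrN expr1n.
have cfu : commr_rmorph (intr : int -> R) (z ^+ 2) by move=> a; apply: mulrC.
have fG r : (0 < r)%N -> horner_morph cfu (G s r) = Gexpr (z ^+ 2) s r.
  by move=> r_gt0; rewrite G_Gexpr ?(ltnW s_ge2) // rmorph_Gexpr /= horner_morphX.
have G2z : Gexpr (z ^+ 2) s 2 = 0.
  by apply: Gexpr2_root; rewrite ?(ltnW s_ge2) // -exprM prim_expr_order.
have Gpz : Gexpr (z ^+ 2) s p = 0.
  by rewrite -fG ?(ltnW p_ge2) // Gp_dvd rmorphM /= fG // G2z mulr0.
have zp := Gexpr_root_sqr (ltnW s_ge2) (ltnW p_ge2) zn z1 Gpz.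
have z_neq0 : z != 0 by rewrite (prim_root_eq0 pz); lia.
rewrite (prim_order_dvd pz); apply/eqP/(mulIf (expf_neq0 2 z_neq0)).
by rewrite -exprD subnK // mul1r.
Qed.

End GexprRoots.

Theorem proposition5 (s p : nat) :
  (2 <= s)%N -> (2 <= p)%N ->
  (dvdZx (G s 2) (G s p) <-> p = 2 %[mod 2 * (2 * s - 1)]).
Proof.
move=> s_ge2 p_ge2; have s_gt0 := ltnW s_ge2.
split=> [[q Gp_dvd] | /eqP].
  have [z pz] := @C_prim_root_exists (2 * (2 * s - 1)) ltac:(lia).
  by apply/eqP; rewrite eqn_mod_dvd //; apply: dvd_pred2_of_G_dvd pz Gp_dvd.
rewrite eqn_mod_dvd // => /dvdnP [k p_eq].
rewrite (_ : p = 2 * ((2 * s - 1) * k).+1)%N; last by lia.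
by rewrite /dvdZx !G_Gexpr //; apply: Gexpr2_dvd_Gexpr.
Qed.
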